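(* Let $(b,c)$ be a locally finite, connected graph over a countable set $X$, and let $G$ be a nilpotent group acting cocompactly on $X$ such that $H_{b,c}$ is $G$-invariant. Fix $x_0\in X$, let $\mathcal{K}$ be the closure in $C(X)$ of $\{f\in\mathcal{H}^+ : f(x_0)=1\}$ and let $\mathcal{M}=\{f\in\mathcal{K}: f \text{ is multiplicative}\}$. Then $\mathcal{M}=\mathrm{ex}\,\mathcal{K}$, the set of extreme points of $\mathcal{K}$.
   Context: $X$ is a countable set. A graph over $X$ is a pair $(b,c)$ with $b:X\times X\to[0,\infty)$ and $c:X\to\mathbb{R}$ such that $\sum_{y}b(x,y)<\infty$ for all $x$ ($b$ need not be symmetric). It is locally finite if each $x$ has only finitely many $y$ with $b(x,y)>0$, and connected if for all $x,z\in X$ there is a finite sequence $x=y_1,\dots,y_n=z$ with $b(y_i,y_{i+1})>0$. $C(X)$ is the space of real functions on $X$ with the product topology. $\mathrm{Dom}(H)=\{f:\sum_y b(x,y)|f(y)|<\infty\ \forall x\}$, $H_{b,c}f(x)=\sum_y b(x,y)(f(x)-f(y))+c(x)f(x)$; $f$ is harmonic if $Hf=0$, and $\mathcal{H}^+$ is the set of nonnegative, nonzero harmonic functions. For $G$ acting on $X$, $T_gf(x)=f(g^{-1}x)$; the action is cocompact if $GV=X$ for some finite $V$; $H$ is $G$-invariant if $T_g(\mathrm{Dom}(H))\subseteq\mathrm{Dom}(H)$ and $HT_g=T_gH$ for all $g\in G$. $f$ is multiplicative if there is a homomorphism $\gamma:G\to(0,\infty)$ with $T_gf=\gamma(g^{-1})f$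 for all $g\in G$. *)

From HB Require Import structures.
From mathcomp Require Import all_boot all_order all_algebra.
From mathcomp Require Import all_classical all_reals all_analysis.
From mathcomp Require Import monoid.
Set Implicit Arguments. Unset Strict Implicit. Unset Printing Implicit Defensive.
Import Order.TTheory GRing.Theory Num.Theory numFieldNormedType.Exports.
Local Open Scope classical_set_scope.
Local Open Scope ring_scope.

Section Nilpotent.
Variable G : groupType.

Definition is_subgroup (S : set G) : Prop :=
  S 1%g /\ (forall a b, S a -> S b -> S (a * b)%g) /\ (forall a, S a -> S (a^-1)%g).

Definition gen_subgroup (S : set G) : set G :=
  \bigcap_(H in [set H : set G | is_subgroup H /\ S `<=` H]) H.

Fixpoint lcs (n : nat) : set G :=
  match n with
  | 0 => setT
  | n'.+1 => gen_subgroup [set x : G | exists a b, lcs n' a /\ x = commg a b]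
  end.

Definition nilpotent_group : Prop := exists n, lcs n = [set 1%g].
End Nilpotent.

Section Graph.
Variables (R : realType) (X : countType).

(* sum of a real function over X, meaningful for absolutely summable g *)
Definition sumX (g : X -> R) : R :=
  fine (\esum_(y in [set: X]) (Num.max (g y) 0)%:E)
  - fine (\esum_(y in [set: X]) (Num.max (- g y) 0)%:E).

Definition is_graph (b : X -> X -> R) (c : X -> R) : Prop :=
  (forall x y, 0 <= b x y) /\
  (forall x, (\esum_(y in [set: X]) (b x y)%:E < +oo)%E).

Definition locally_finite (b : X -> X -> R) : Prop :=
  forall x, finite_set [set y | 0 < b x y].

Definition graph_connected (b : X -> X -> R) : Prop :=
  forall x z : X, exists s : seq X,
    path (fun u v => 0 < b u v) x s /\ last x s = z.

Definition DomH (b : X -> X -> R) : set (X -> R) :=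
  [set f | forall x, (\esum_(y in [set: X]) (b x y * `|f y|)%:E < +oo)%E].

Definition Hop (b : X -> X -> R) (c : X -> R) (f : X -> R) : X -> R :=
  fun x => sumX (fun y => b x y * (f x - f y)) + c x * f x.

Definition harmonic b c (f : X -> R) : Prop := DomH b f /\ Hop b c f = (fun=> 0).

Definition Hplus b c : set (X -> R) :=
  [set f | harmonic b c f /\ (forall x, 0 <= f x) /\ f <> (fun=> 0)].

Variable G : groupType.

Definition is_action (act : G -> X -> X) : Prop :=
  (forall x, act 1%g x = x) /\ (forall g h x, act (g * h)%g x = act g (act h x)).

Definition Tg (act : G -> X -> X) (g : G) (f : X -> R) : X -> R :=
  fun x => f (act (g^-1)%g x).

Definition cocompact (act : G -> X -> X) : Prop :=
  exists V : seq X, forall x, exists g v, v \in V /\ x = act g v.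

Definition G_invariant (act : G -> X -> X) b c : Prop :=
  forall g, (forall f, DomH b f -> DomH b (Tg act g f)) /\
            (forall f, DomH b f -> Hop b c (Tg act g f) = Tg act g (Hop b c f)).

Definition multiplicative (act : G -> X -> X) (f : X -> R) : Prop :=
  exists gamma : G -> R,
    (forall g, 0 < gamma g) /\
    (forall g h, gamma (g * h)%g = gamma g * gamma h) /\
    (forall g, Tg act g f = (fun x => gamma (g^-1)%g * f x)).

End Graph.

(* K = closure in C(X) (product topology) of {f in H^+ : f x0 = 1} *)
Definition Kset (R : realType) (X : countType) b c (x0 : X) : set (X -> R) :=
  closure [set f : {ptws X -> R} | Hplus b c f /\ f x0 = 1].

Definition extreme_points (R : realType) (X : Type) (K : set (X -> R)) : set (X -> R) :=
  [set f | K f /\ forall g h (t : R), K g -> K h -> 0 < t < 1 ->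
             f = (fun x => t * g x + (1 - t) * h x) -> g = h].

(* Positive harmonic functions satisfy a Harnack inequality along edges, hence
   between any two vertices, and translating by G preserves its constants;
   cocompactness makes finitely many of them suffice.  The lower central series
   G = Γ_0 ⊇ Γ_1 ⊇ ... ⊇ Γ_n = 1 is then descended twice.

   An extreme point f of K dominates only multiples of itself.  If f is
   invariant on Γ_(k+2) and multiplicative on Γ_(k+1) with character γ, then
   for a in Γ_k the number γ([a^n, e^n]) = γ([a, e])^(n^2) is bounded above and
   below by K^n by Harnack, so γ([a, e]) = 1.  Thus f is Γ_(k+1)-invariant,
   which gives f∘z <= C f for z in Γ_k, and f∘z is a multiple of f.

   Conversely let f be multiplicative and f = t g + (1 - t) h.  The ratio
   u = g/f is bounded by 1/t.  If u is Γ_(k+1)-invariant and z is in Γ_k, the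
   drift u∘z - u telescopes along z-orbits; were its supremum m positive, the
   Harnack inequality for the positive harmonic (m - (u∘z - u)) f would keep
   the drift above m/2 along arbitrarily long orbit segments, contradicting
   u <= 1/t.  Hence u is G-invariant, attains its maximum on a finite
   fundamental set, and the minimum principle for (max u) f - g gives g = f. *)

From Pilot Require Import Defs.
From HB Require Import structures.
From mathcomp Require Import all_boot all_order all_algebra.
From mathcomp Require Import all_classical all_reals all_analysis.
From mathcomp Require Import monoid finmap ring lra.
Set Implicit Arguments. Unset Strict Implicit. Unset Printing Implicit Defensive.
Import Order.TTheory GRing.Theory Num.Theory numFieldNormedType.Exports.
Local Open Scope classical_set_scope.
Local Open Scope ring_scope.

Lemma expr_sq_bounded_le1 (R : archiRealFieldType) (r K : R) :
  (forall n, r ^+ (n * n) <= K ^+ n) -> r <= 1.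
Proof.
move=> bnd; rewrite leNgt; apply/negP => r_gt1.
have bernoulli n : 1 + n%:R * (r - 1) <= r ^+ n.
  elim: n => [|n IHn]; first by rewrite mul0r addr0 expr0.
  rewrite exprS -natr1.
  have : r * (1 + n%:R * (r - 1)) <= r * r ^+ n by rewrite ler_wpM2l //; lra.
  have : 0 <= n%:R * (r - 1) * (r - 1) by rewrite !mulr_ge0 //; lra.
  nra.
have r_leK : r <= K by have := bnd 1%N; rewrite !expr1.
have rn_leK n : (0 < n)%N -> r ^+ n <= K.
  move=> n_gt0; have := bnd n.
  by rewrite exprM ler_pXn2r // ?nnegrE ?exprn_ge0 //; lra.
pose n := (Num.truncn (K / (r - 1))).+1.
have : K / (r - 1) < n%:R by exact: truncnS_gt.
rewrite ltr_pdivrMr ?subr_gt0 //.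
have := bernoulli n; have := rn_leK n isT; lra.
Qed.

Lemma uniform_bound (R : numDomainType) (T : eqType) (s : seq T) (P : T -> R -> Prop) :
  (forall v C C', P v C -> C <= C' -> P v C') ->
  (forall v, v \in s -> exists2 C, 0 < C & P v C) ->
  exists2 C, 0 < C & forall v, v \in s -> P v C.
Proof.
move=> P_mono; elim: s => [|v s IHs] Ps; first by exists 1.
have [C1 C1_gt0 PC1] := Ps v (mem_head _ _).
have [C2 C2_gt0 PC2] : exists2 C, 0 < C & forall w, w \in s -> P w C.
  by apply: IHs => w ws; apply: Ps; rewrite in_cons ws orbT.
exists (C1 + C2) => [|w]; first exact: addr_gt0.
rewrite in_cons => /predU1P [-> | ws].
- by apply: P_mono PC1 _; rewrite lerDl ltW.
- by apply: P_mono (PC2 _ ws) _; rewrite lerDr ltW.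
Qed.

Lemma nat_descend (P : nat -> Prop) n : P n -> (forall k, P k.+1 -> P k) -> P 0.
Proof. by move=> Pn step; elim: n Pn => // n IHn /step. Qed.

Section LowerCentralSeries.
Variable G : groupType.
Local Open Scope group_scope.
Implicit Types (S H : set G) (x y a e : G).

Lemma gen_subgroup_sub S : S `<=` gen_subgroup S.
Proof. by move=> x Sx H [_ SH]; exact: SH. Qed.

Lemma gen_subgroup_min S H : is_subgroup H -> S `<=` H -> gen_subgroup S `<=` H.
Proof. by move=> sH SH x; apply; split. Qed.

Lemma gen_subgroupP S : is_subgroup (gen_subgroup S).
Proof.
split; [|split].
- by move=> H [[H1 _] _].
- by move=> x y Sx Sy H HS; have [_ [HM _]] := HS.1; apply: HM; [exact: Sx|exact: Sy].
- by move=> x Sx H HS; have [_ [_ HV]] := HS.1; apply: HV; exact: Sx.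
Qed.

Lemma subgroup1 H : is_subgroup H -> H 1.
Proof. by case. Qed.

Lemma subgroupM H x y : is_subgroup H -> H x -> H y -> H (x * y).
Proof. by move=> [_ [HM _]]; exact: HM. Qed.

Lemma subgroupV H x : is_subgroup H -> H x -> H x^-1.
Proof. by move=> [_ [_ HV]]; exact: HV. Qed.

Lemma subgroupX H x n : is_subgroup H -> H x -> H (x ^+ n).
Proof.
move=> sH Hx; elim: n => [|n IHn]; first exact: subgroup1.
by rewrite expgS; exact: subgroupM.
Qed.

Lemma lcs_subgroup k : is_subgroup (@lcs G k).
Proof. by case: k => [|k]; [split | exact: gen_subgroupP]. Qed.

Lemma lcs_commg k a e : lcs k a -> lcs k.+1 [~ a, e].
Proof. by move=> ka; apply: gen_subgroup_sub; exists a, e. Qed.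

Lemma lcs_succ_trivial n : @lcs G n = [set 1] -> @lcs G n.+1 `<=` [set 1].
Proof.
move=> lcs_n; apply: gen_subgroup_min => [|_ [a [e [na ->]]]].
  by split=> [//|]; split=> [x y -> ->|x ->]; rewrite ?mulg1 ?invg1.
have : @lcs G n a := na.
by rewrite lcs_n => ->; rewrite comm1g.
Qed.

Lemma commgMl x1 x2 y : [~ x1 * x2, y] = [~ x1, y] ^ x2 * [~ x2, y].
Proof. by rewrite /commg /conjg !invgM !mulgA !mulgK. Qed.

Lemma commgMr x y1 y2 : [~ x, y1 * y2] = [~ x, y2] * [~ x, y1] ^ y2.
Proof. by rewrite /commg /conjg !invgM !mulgA !mulgK. Qed.

Lemma conjg_commg x y : x ^ y = x * [~ x, y].
Proof. by rewrite /commg mulVKg. Qed.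

Lemma invg_commg x y : [~ x, y]^-1 = [~ y, x].
Proof. by rewrite /commg /conjg !invgM !invgK !mulgA. Qed.

End LowerCentralSeries.

Section FiniteSupport.
Variables (R : realType) (X : countType).

Lemma esum_finite_support (S : {fset X}) (a : X -> R) :
  (forall y, 0 <= a y) -> (forall y, y \notin S -> a y = 0) ->
  (\esum_(y in [set: X]) (a y)%:E = (\sum_(y <- S) a y)%:E)%E.
Proof.
move=> a_ge0 a_supp.
rewrite (_ : (\esum_(y in [set: X]) (a y)%:E = \esum_(y in [set` S]) (a y)%:E)%E).
  rewrite esum_fset //; last by move=> y _; rewrite lee_fin.
  by rewrite fsbig_finite //= set_fsetK sumEFin.
rewrite [RHS]esum_mkcond; apply: eq_esum => y _.
case: ifPn => // yNS; rewrite a_supp //; apply: contra yNS => yS; exact: mem_set.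
Qed.

Lemma sumX_finite_support (S : {fset X}) (F : X -> R) :
  (forall y, y \notin S -> F y = 0) -> sumX F = \sum_(y <- S) F y.
Proof.
move=> F_supp; rewrite /sumX.
rewrite (@esum_finite_support S (fun y => Num.max (F y) 0)); first last.
- by move=> y /F_supp ->; rewrite maxxx.
- by move=> y; rewrite le_max lexx orbT.
rewrite (@esum_finite_support S (fun y => Num.max (- F y) 0)); first last.
- by move=> y /F_supp ->; rewrite oppr0 maxxx.
- by move=> y; rewrite le_max lexx orbT.
rewrite /= -sumrB; apply: eq_bigr => y _.
have [F_ge0 | F_lt0] := lerP 0 (F y).
- by rewrite max_r ?subr0 // oppr_le0.
- by rewrite max_l ?sub0r ?opprK // oppr_ge0 ltW.
Qed.

End FiniteSupport.

Section Graph.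
Variables (R : realType) (X : countType) (b : X -> X -> R) (c : X -> R).
Hypotheses (graph_bc : is_graph b c) (lf_b : locally_finite b).
Implicit Types (f g : X -> R) (x y : X).

Definition nbrs x : {fset X} := fset_set [set y | 0 < b x y].

Lemma b_ge0 x y : 0 <= b x y.
Proof. by case: graph_bc. Qed.

Lemma mem_nbrs x y : 0 < b x y -> y \in nbrs x.
Proof. by move=> bxy; rewrite /nbrs in_fset_set; [exact: mem_set | exact: lf_b]. Qed.

Lemma b_notin_nbrs x y : y \notin nbrs x -> b x y = 0.
Proof.
move=> yNx; apply/eqP; rewrite eq_le b_ge0 andbT leNgt.
by apply: contra yNx; exact: mem_nbrs.
Qed.

Lemma sumX_nbrs x F : sumX (fun y => b x y * F y) = \sum_(y <- nbrs x) b x y * F y.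
Proof. by apply: sumX_finite_support => y /b_notin_nbrs ->; rewrite mul0r. Qed.

Lemma DomH_locally_finite f : DomH b f.
Proof.
move=> x; rewrite (@esum_finite_support _ _ (nbrs x) (fun y => b x y * `|f y|)) ?ltry //.
- by move=> y; rewrite mulr_ge0 // b_ge0.
- by move=> y /b_notin_nbrs ->; rewrite mul0r.
Qed.

Definition deg x := \sum_(y <- nbrs x) b x y + c x.

Definition harm f := forall x, \sum_(y <- nbrs x) b x y * f y = deg x * f x.

Lemma harmonicP f : Defs.harmonic b c f <-> harm f.
Proof.
have HopE x : Hop b c f x = deg x * f x - \sum_(y <- nbrs x) b x y * f y.
  rewrite /Hop sumX_nbrs /deg mulrDl big_distrl /= addrAC; congr (_ + _).
  by rewrite -sumrB; apply: eq_bigr => y _; rewrite mulrBr.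
split=> [[_ Hf0] x | hf].
- by apply/eqP; rewrite eq_sym -subr_eq0 -HopE Hf0.
- by split; [exact: DomH_locally_finite | apply: funext => x; rewrite HopE hf subrr].
Qed.

Lemma harm_lin f g (a e : R) : harm f -> harm g -> harm (fun y => a * f y + e * g y).
Proof.
move=> hf hg x.
transitivity (a * \sum_(y <- nbrs x) b x y * f y + e * \sum_(y <- nbrs x) b x y * g y).
  by rewrite !mulr_sumr -big_split; apply: eq_bigr => y _ /=; ring.
by rewrite hf hg; ring.
Qed.

Lemma harmZ f (a : R) : harm f -> harm (fun y => a * f y).
Proof. by move=> hf; have := harm_lin a 0 hf hf; congr harm; apply: funext => y; ring. Qed.

Lemma harmB f g : harm f -> harm g -> harm (fun y => f y - g y).
Proof. by move=> hf hg; have := harm_lin 1 (-1) hf hg; congr harm; apply: funext => y; ring. Qed.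

Definition pos_harm f := harm f /\ forall y, 0 <= f y.

Definition normalized x0 := [set f | pos_harm f /\ f x0 = 1].

Lemma closed_normalized x0 : closed (normalized x0 : set {ptws X -> R}).
Proof.
have eval_cont y : continuous (fun f : {ptws X -> R} => f y).
  exact: (@proj_continuous X (fun=> R) y).
have closed_pre (F : {ptws X -> R} -> R) A : continuous F -> closed A -> closed (F @^-1` A).
  by move=> F_cont; apply: (continuous_closedP F).1.
have harm_cont x : continuous (fun f : {ptws X -> R} =>
    \sum_(y <- nbrs x) b x y * f y - deg x * f x).
  have sum_cont : continuous (fun f : {ptws X -> R} => \sum_(y <- nbrs x) b x y * f y).
    apply: (@continuous_big _ _ _ _ xpredT add_continuous {ptws X -> R} (nbrs x)
      (fun y f => b x y * f y)) => y _ g.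
    exact: (continuousM (@cst_continuous _ _ _ g) (eval_cont y g)).
  move=> f; apply: (continuousB (sum_cont f)).
  exact: (continuousM (@cst_continuous _ _ _ f) (eval_cont x f)).
rewrite (_ : normalized x0 = \bigcap_(x in [set: X])
    ((fun f => \sum_(y <- nbrs x) b x y * f y - deg x * f x) @^-1` [set 0]
     `&` (fun f : {ptws X -> R} => f x) @^-1` [set r | 0 <= r])
  `&` (fun f : {ptws X -> R} => f x0) @^-1` [set 1]).
  apply: closedI; last exact: closed_pre (eval_cont x0) (@closed_eq _ 1).
  apply: closed_bigI => x _; apply: closedI.
  - exact: closed_pre (harm_cont x) (@closed_eq _ 0).
  - exact: closed_pre (eval_cont x) (@closed_ge _ 0).
apply/seteqP; split=> [f [[hf f_ge0] f1] | f [hf f1]]; split=> //.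
- by move=> x _; split; [rewrite /= hf subrr | exact: f_ge0].
- by split=> x; have [/= /eqP] := hf x I; rewrite ?subr_eq0 => /eqP.
Qed.

Lemma Kset_normalized x0 : Kset b c x0 = normalized x0.
Proof.
apply/seteqP; split=> f.
- move=> Kf; apply: closed_normalized; apply: closureS Kf.
  by move=> g [[/harmonicP hg [g_ge0 _]] g1].
- move=> [[hf f_ge0] f1]; apply: subset_closure; split=> //.
  split; first exact/harmonicP.
  split=> // f0; have := congr1 (fun F => F x0) f0; rewrite /= f1 => /eqP.
  by rewrite oner_eq0.
Qed.

End Graph.

Section Harnack.
Variables (R : realType) (X : countType) (b : X -> X -> R) (c : X -> R).
Hypotheses (graph_bc : is_graph b c) (lf_b : locally_finite b).
Implicit Types (f : X -> R) (x y : X) (C : R).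
Local Notation pos_harm := (pos_harm b c).

Definition harnack x y C := forall f, pos_harm f -> f y <= C * f x.

Lemma harnack_le x y C C' : harnack x y C -> C <= C' -> harnack x y C'.
Proof.
move=> hC CC' f pf; apply: le_trans (hC f pf) _.
by rewrite ler_wpM2r //; case: pf.
Qed.

Lemma harnack_trans x y z C1 C2 :
  0 <= C2 -> harnack x y C1 -> harnack y z C2 -> harnack x z (C2 * C1).
Proof.
move=> C2_ge0 hxy hyz f pf; apply: le_trans (hyz f pf) _.
by rewrite -mulrA ler_wpM2l // hxy.
Qed.

Lemma harnack_edge x y : 0 < b x y -> exists2 C, 0 < C & harnack x y C.
Proof.
move=> bxy; exists (`|deg b c x / b x y| + 1) => [|f [hf f_ge0]].
  by rewrite ltr_pwDr.
have : b x y * f y <= deg b c x * f x.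
  rewrite -hf (bigD1_seq y) /= ?fset_uniq ?(mem_nbrs lf_b) // lerDl.
  by rewrite sumr_ge0 // => z _; rewrite mulr_ge0 ?(b_ge0 graph_bc).
rewrite -ler_pdivlMl // mulrA [_^-1 * _]mulrC => /le_trans; apply.
by rewrite ler_wpM2r // (le_trans (ler_norm _)) // lerDl.
Qed.

Hypothesis conn_b : graph_connected b.

Lemma harnack_connected x z : exists2 C, 0 < C & harnack x z C.
Proof.
have [s [bs <-]] := conn_b x z.
elim: s x bs => [|y s IHs] x /=.
  by move=> _; exists 1 => // f _; rewrite mul1r.
move=> /andP [bxy bs].
have [C1 C1_gt0 hxy] := harnack_edge bxy.
have [C2 C2_gt0 hys] := IHs y bs.
by exists (C2 * C1); [exact: mulr_gt0 | exact: harnack_trans (ltW C2_gt0) hxy hys].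
Qed.

Lemma pos_harm_eq0 f x : pos_harm f -> f x = 0 -> forall y, f y = 0.
Proof.
move=> pf fx0 y; have [C _ hC] := harnack_connected x y.
have := hC f pf; rewrite fx0 mulr0 => fy_le0.
by apply/eqP; rewrite eq_le fy_le0; case: pf => _ ->.
Qed.

Lemma pos_harm_gt0 f x : pos_harm f -> 0 < f x -> forall y, 0 < f y.
Proof.
move=> pf fx_gt0 y; have [C C_gt0 hC] := harnack_connected y x.
by rewrite -(pmulr_rgt0 _ C_gt0) (lt_le_trans fx_gt0 (hC f pf)).
Qed.

Variables (G : groupType) (act : G -> X -> X).
Hypotheses (act_G : is_action act) (inv_bc : G_invariant act b c).

Lemma act1 x : act 1%g x = x.
Proof. by case: act_G. Qed.

Lemma actM (g h : G) x : act (g * h)%g x = act g (act h x).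
Proof. by case: act_G. Qed.

Lemma actMC (g h : G) x : act (g * h)%g x = act [~ g^-1, h^-1]%g (act h (act g x)).
Proof. by rewrite -!actM -mulgA -commgCV. Qed.

Lemma harm_act f (h : G) : harm b c f -> harm b c (fun y => f (act h y)).
Proof.
move=> /(harmonicP graph_bc lf_b) [Df Hf0]; apply/(harmonicP graph_bc lf_b).
have [DomT HopT] := inv_bc h^-1%g.
have -> : (fun y => f (act h y)) = Tg act h^-1%g f.
  by apply: funext => y; rewrite /Tg invgK.
by split; [exact: DomT | rewrite HopT // Hf0].
Qed.

Lemma pos_harm_act f (h : G) : pos_harm f -> pos_harm (fun y => f (act h y)).
Proof. by move=> [hf f_ge0]; split=> [|y //]; exact: harm_act. Qed.

Lemma harnack_act x y C (h : G) : harnack x y C -> harnack (act h x) (act h y) C.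
Proof. by move=> hC f pf; exact: (hC _ (pos_harm_act h pf)). Qed.

Hypothesis coc_G : cocompact act.

Section ExtremeIsMultiplicative.
Variables (x0 : X) (f : X -> R).
Hypotheses (pf : pos_harm f) (f1 : f x0 = 1).
Hypothesis f_extreme : forall g h (t : R),
  normalized b c x0 g -> normalized b c x0 h -> 0 < t < 1 ->
  f = (fun x => t * g x + (1 - t) * h x) -> g = h.

Lemma extreme_gt0 y : 0 < f y.
Proof. by apply: (pos_harm_gt0 (x := x0) pf); rewrite f1. Qed.

Lemma extreme_minorant g : pos_harm g -> (forall y, g y <= f y) ->
  forall y, g y = g x0 * f y.
Proof.
move=> pg g_le_f; have [hg g_ge0] := pg.
have pfg : pos_harm (fun y => f y - g y).
  by split=> [|y]; [apply: harmB; [case: pf | exact: hg] | rewrite subr_ge0].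
have [gx0_eq0 | gx0_neq0] := eqVneq (g x0) 0.
  by move=> y; rewrite (pos_harm_eq0 pg gx0_eq0) gx0_eq0 mul0r.
have [gx0_eq1 | gx0_neq1] := eqVneq (g x0) 1.
  move=> y; apply/eqP; rewrite gx0_eq1 mul1r eq_sym -subr_eq0; apply/eqP.
  by apply: (pos_harm_eq0 (x := x0) pfg); rewrite /= f1 gx0_eq1 subrr.
set t := g x0 in gx0_neq0 gx0_neq1 *.
have t_gt0 : 0 < t by rewrite lt_neqAle eq_sym gx0_neq0 g_ge0.
have t_lt1 : t < 1 by rewrite lt_neqAle gx0_neq1 -f1 g_le_f.
have t1_neq0 : 1 - t != 0 by rewrite subr_eq0 eq_sym.
have E : (fun y => t^-1 * g y) = (fun y => (1 - t)^-1 * (f y - g y)).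
  apply: (f_extreme (t := t)).
  - split; last by rewrite mulVf.
    by split=> [|z]; [exact: harmZ | rewrite mulr_ge0 // invr_ge0 ltW].
  - split; last by rewrite /= f1 mulVf.
    split=> [|z]; first by apply: harmZ; case: pfg.
    by rewrite mulr_ge0 ?invr_ge0 ?subr_ge0 ?(ltW t_lt1) //; case: pfg.
  - by rewrite t_gt0 t_lt1.
  - by apply: funext => z; rewrite !mulrA mulfV // mulfV //; ring.
move=> y; have /= Ey := congr1 (fun F => F y) E.
set B := (1 - t)^-1 * (f y - g y) in Ey.
have gB : g y = t * B by rewrite -Ey mulVKf ?gt_eqF.
have fgB : f y - g y = (1 - t) * B by rewrite /B mulVKf.
by rewrite gB (_ : f y = B) //; nra.
Qed.

Definition gam (z : G) := f (act z x0).

Definition invariant_on (S : set G) := forall z, S z -> forall y, f (act z y) = f y.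

Definition multiplicative_on (S : set G) :=
  forall z, S z -> forall y, f (act z y) = gam z * f y.

Lemma gam1 : gam 1%g = 1.
Proof. by rewrite /gam act1. Qed.

Lemma multiplicative_of_dominated (z : G) C : 0 < C ->
  (forall y, f (act z y) <= C * f y) -> forall y, f (act z y) = gam z * f y.
Proof.
move=> C_gt0 fz_le y.
have pfz : pos_harm (fun y => C^-1 * f (act z y)).
  split=> [|y']; first by apply: harmZ; apply: harm_act; case: pf.
  by rewrite mulr_ge0 ?invr_ge0 ?(ltW C_gt0) ?ltW ?extreme_gt0.
have fz_min y' : C^-1 * f (act z y') <= f y'.
  by rewrite -(ler_pM2l C_gt0) mulrA mulfV ?gt_eqF // mul1r.
have /= fzy := extreme_minorant pfz fz_min y.
by apply: (mulfI (invr_neq0 (lt0r_neq0 C_gt0))); rewrite fzy mulrA.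
Qed.

Lemma dominated_of_invariant k (z : G) : invariant_on (lcs k.+1) -> lcs k z ->
  exists2 C, 0 < C & forall y, f (act z y) <= C * f y.
Proof.
move=> inv_k1 kz; have [V V_fund] := coc_G.
have [C C_gt0 hC] := uniform_bound (s := V) (P := fun v C => harnack v (act z v) C)
  (fun v C C' hC CC' => harnack_le hC CC') (fun v _ => harnack_connected v (act z v)).
exists C => // y; have [h [v [vV ->]]] := V_fund y.
rewrite -actM actMC inv_k1; first exact: (harnack_act h (hC v vV)).
by apply: lcs_commg; apply: subgroupV => //; exact: lcs_subgroup.
Qed.

Definition right_bounded (s : G) C := forall h, f (act (h * s)%g x0) <= C * f (act h x0).

Lemma right_bounded_ex s : exists2 C, 0 < C & right_bounded s C.
Proof.
have [C C_gt0 hC] := harnack_connected x0 (act s x0).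
by exists C => // h; rewrite actM; exact: (harnack_act h hC).
Qed.

Lemma right_boundedM s s' C C' : 0 <= C' ->
  right_bounded s C -> right_bounded s' C' -> right_bounded (s * s') (C' * C).
Proof.
move=> C'_ge0 hs hs' h; rewrite mulgA; apply: le_trans (hs' _) _.
by rewrite -mulrA ler_wpM2l.
Qed.

Lemma right_boundedX s C n : 0 <= C -> right_bounded s C -> right_bounded (s ^+ n) (C ^+ n).
Proof.
move=> C_ge0 hs; elim: n => [|n IHn] h; first by rewrite mulg1 mul1r.
by rewrite expgSr exprS; exact: right_boundedM.
Qed.

Lemma commg_right_bounded a e :
  exists2 K, 0 < K & forall n, right_bounded [~ a ^+ n, e ^+ n]%g (K ^+ n).
Proof.
have [C1 C1_gt0 h1] := right_bounded_ex a^-1.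
have [C2 C2_gt0 h2] := right_bounded_ex e^-1.
have [C3 C3_gt0 h3] := right_bounded_ex a.
have [C4 C4_gt0 h4] := right_bounded_ex e.
exists (C4 * (C3 * (C2 * C1))) => [|n]; first by rewrite !mulr_gt0.
have -> : [~ a ^+ n, e ^+ n]%g = (a^-1 ^+ n * e^-1 ^+ n * a ^+ n * e ^+ n)%g.
  by rewrite /commg /conjg !expVgn !mulgA.
have hX s C : 0 < C -> right_bounded s C -> right_bounded (s ^+ n) (C ^+ n).
  by move=> /ltW; exact: right_boundedX.
have Xn_ge0 C : 0 < C -> 0 <= C ^+ n by move=> /ltW /exprn_ge0.
rewrite !exprMn; apply: right_boundedM (Xn_ge0 _ C4_gt0) _ (hX _ _ C4_gt0 h4).
apply: right_boundedM (Xn_ge0 _ C3_gt0) _ (hX _ _ C3_gt0 h3).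
exact: right_boundedM (Xn_ge0 _ C2_gt0) (hX _ _ C1_gt0 h1) (hX _ _ C2_gt0 h2).
Qed.

Section CommutatorCharacter.
Variable k : nat.
Hypotheses (inv_k2 : invariant_on (lcs k.+2)) (mult_k1 : multiplicative_on (lcs k.+1)).

Lemma gamM m g : lcs k.+1 m -> gam (m * g)%g = gam m * gam g.
Proof. by move=> k1m; rewrite /gam actM mult_k1. Qed.

Lemma gamJM m g d : lcs k.+1 m -> gam (m ^ g * d)%g = gam m * gam d.
Proof.
move=> k1m; rewrite conjg_commg -mulgA gamM //; congr (_ * _).
by rewrite /gam actM inv_k2 //; exact: lcs_commg.
Qed.

Lemma gamJ m g : lcs k.+1 m -> gam (m ^ g)%g = gam m.
Proof. by move=> k1m; have := gamJM g 1%g k1m; rewrite mulg1 gam1 mulr1. Qed.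

Lemma gam_commgXr a e n : lcs k a -> gam [~ a, e ^+ n]%g = gam [~ a, e]%g ^+ n.
Proof.
move=> ka; elim: n => [|n IHn]; first by rewrite expg0 commg1 gam1 expr0.
by rewrite expgS commgMr gamM ?gamJ ?IHn ?exprSr //; exact: lcs_commg.
Qed.

Lemma gam_commgXl a e n : lcs k a -> gam [~ a ^+ n, e]%g = gam [~ a, e]%g ^+ n.
Proof.
move=> ka; elim: n => [|n IHn]; first by rewrite expg0 comm1g gam1 expr0.
by rewrite expgS commgMl gamJM ?IHn ?exprS //; exact: lcs_commg.
Qed.

Lemma gam_commgXX a e n : lcs k a ->
  gam [~ a ^+ n, e ^+ n]%g = gam [~ a, e]%g ^+ (n * n).
Proof.
move=> ka; rewrite gam_commgXr ?gam_commgXl ?exprM //.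
by apply: subgroupX => //; exact: lcs_subgroup.
Qed.

Lemma gam_commg a e : lcs k a -> gam [~ a, e]%g = 1.
Proof.
move=> ka; have r_gt0 : 0 < gam [~ a, e]%g by exact: extreme_gt0.
have [K _ bndK] := commg_right_bounded a e.
have [K' _ bndK'] := commg_right_bounded e a.
apply/eqP; rewrite eq_le; apply/andP; split.
- apply: (@expr_sq_bounded_le1 _ _ K) => n.
  by have := bndK n 1%g; rewrite mul1g act1 f1 mulr1 -gam_commgXX.
- rewrite -invf_le1 //; apply: (@expr_sq_bounded_le1 _ _ K') => n.
  have := bndK' n [~ a ^+ n, e ^+ n]%g; rewrite -(invg_commg (a ^+ n)) mulgV act1 f1.
  by rewrite exprVn -gam_commgXX // -ler_pdivrMr ?mul1r // /gam extreme_gt0.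
Qed.

Lemma invariant_step : invariant_on (lcs k.+1).
Proof.
have sub_fix : is_subgroup [set z : G | forall y, f (act z y) = f y].
  split; [|split] => [y|z z' fz fz' y|z fz y] /=; first by rewrite act1.
  - by rewrite actM fz fz'.
  - by rewrite -(fz (act z^-1%g y)) -actM mulgV act1.
move=> z k1z; apply: (gen_subgroup_min sub_fix _ k1z) => _ [a [e [ka ->]]] y /=.
by rewrite mult_k1 ?gam_commg ?mul1r //; exact: lcs_commg.
Qed.

Lemma descend_step : invariant_on (lcs k.+1) /\ multiplicative_on (lcs k).
Proof.
split=> [|z kz]; first exact: invariant_step.
have [C C_gt0 fz_le] := dominated_of_invariant invariant_step kz.
exact: multiplicative_of_dominated C_gt0 fz_le.
Qed.

End CommutatorCharacter.

Lemma extreme_multiplicative : nilpotent_group G -> Defs.multiplicative act f.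
Proof.
move=> [n lcs_n].
have [_ mult0] : invariant_on (lcs 1) /\ multiplicative_on (lcs 0).
  apply: (@nat_descend (fun k => invariant_on (lcs k.+1) /\ multiplicative_on (lcs k)) n).
    split=> z; last by rewrite lcs_n => -> y; rewrite act1 gam1 mul1r.
    by move=> /(lcs_succ_trivial lcs_n) -> y; rewrite act1.
  by move=> k [inv_k2 mult_k1]; exact: descend_step.
exists gam; split=> [z|]; first exact: extreme_gt0.
split=> [g h|g]; first by rewrite /gam actM (mult0 g I).
by apply: funext => y; rewrite /Tg (mult0 _ I).
Qed.

End ExtremeIsMultiplicative.

Section MultiplicativeIsExtreme.
Variables (x0 : X) (f g g' : X -> R) (t : R) (gamma : G -> R).
Hypotheses (pf : pos_harm f) (f1 : f x0 = 1).
Hypotheses (gamma_gt0 : forall z, 0 < gamma z) (f_mult : forall z y, f (act z y) = gamma z * f y).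
Hypotheses (pg : pos_harm g) (g1 : g x0 = 1) (pg' : pos_harm g') (t01 : 0 < t < 1).
Hypothesis f_split : forall y, f y = t * g y + (1 - t) * g' y.

Lemma mult_gt0 y : 0 < f y.
Proof. by apply: (pos_harm_gt0 (x := x0) pf); rewrite f1. Qed.

Definition ratio y := g y / f y.

Lemma ratio_ge0 y : 0 <= ratio y.
Proof. by rewrite divr_ge0 ?(ltW (mult_gt0 y)) //; case: pg. Qed.

Lemma ratio_le y : ratio y <= t^-1.
Proof.
have [t_gt0 t_lt1] := andP t01.
have tg_le_f : t * g y <= f y.
  by rewrite f_split lerDl mulr_ge0 ?subr_ge0 ?(ltW t_lt1) //; case: pg'.
by rewrite ler_pdivrMr ?mult_gt0 // -(ler_pM2l t_gt0) mulrA mulfV ?gt_eqF // mul1r.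
Qed.

Lemma ratioK y : ratio y * f y = g y.
Proof. by rewrite divfK ?gt_eqF ?mult_gt0. Qed.

Lemma ratio_harnack (phi : X -> R) (s : seq (X * X)) :
  pos_harm (fun y => phi y * f y) -> exists2 K, 0 < K &
    forall p, p \in s -> forall h, phi (act h p.2) <= K * phi (act h p.1).
Proof.
move=> pphi; have phi_ge0 y : 0 <= phi y.
  by have := pphi.2 y; rewrite pmulr_lge0 ?mult_gt0.
apply: uniform_bound => [p C C' hC CC' h | [x y] _].
  by apply: le_trans (hC h) _; rewrite ler_wpM2r.
have [C C_gt0 hC] := harnack_connected x y.
exists (C * f x / f y) => [|h /=]; first by rewrite !mulr_gt0 ?invr_gt0 ?mult_gt0.
have := harnack_act h hC pphi; rewrite /= !f_mult => hphi.
rewrite -(ler_pM2r (mulr_gt0 (gamma_gt0 h) (mult_gt0 y))).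
suff -> : C * f x / f y * phi (act h x) * (gamma h * f y) =
  C * (phi (act h x) * (gamma h * f x)) by [].
by field; rewrite gt_eqF ?mult_gt0.
Qed.

Definition ratio_invariant (S : set G) := forall z, S z -> forall y, ratio (act z y) = ratio y.

Section Drift.
Variables (k : nat) (z : G).
Hypotheses (inv_k1 : ratio_invariant (lcs k.+1)) (kz : lcs k z).

Definition drift y := ratio (act z y) - ratio y.

Lemma drift_le y : drift y <= t^-1.
Proof. by have := ratio_le (act z y); have := ratio_ge0 y; rewrite /drift; lra. Qed.

Lemma pos_harm_drift_gap m : (forall y, drift y <= m) ->
  pos_harm (fun y => (m - drift y) * f y).
Proof.
move=> drift_le_m; split=> [|y]; last by rewrite mulr_ge0 ?subr_ge0 ?(ltW (mult_gt0 y)).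
have -> : (fun y => (m - drift y) * f y) =
    (fun y => m * f y - ((gamma z)^-1 * g (act z y) - g y)).
  apply: funext => y; rewrite /drift mulrBl mulrBl ratioK -[g (act z y)]ratioK f_mult.
  by field; rewrite gt_eqF.
apply: harmB; first by apply: harmZ; case: pf.
by apply: harmB; [apply: harmZ; apply: harm_act; case: pg | case: pg].
Qed.

Lemma ratio_commute h y : ratio (act z (act h y)) = ratio (act h (act z y)).
Proof.
rewrite -actM actMC inv_k1 //; apply: lcs_commg.
by apply: subgroupV => //; exact: lcs_subgroup.
Qed.

Lemma drift_telescope h v N : \sum_(0 <= j < N) drift (act h (act (z ^+ j)%g v)) =
  ratio (act h (act (z ^+ N)%g v)) - ratio (act h v).
Proof.
rewrite -[in ratio (act h v)](act1 v) -(expg0 z).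
apply: (telescope_sumr_eq (fun j => ratio (act h (act (z ^+ j)%g v)))) => // j _.
by rewrite /drift ratio_commute -(actM z) -expgS.
Qed.

Lemma drift_le0 y : drift y <= 0.
Proof.
rewrite leNgt; apply/negP => drift_gt0.
have drift_sup : has_sup (range drift).
  by split; [exists (drift y), y | exists t^-1 => _ [y' _ <-]; exact: drift_le].
set m := sup (range drift).
have drift_le_m y' : drift y' <= m by apply: sup_upper_bound => //; exists y'.
have m_gt0 : 0 < m := lt_le_trans drift_gt0 (drift_le_m y).
have [t_gt0 _] := andP t01.
have [V V_fund] := coc_G.
pose N := (Num.truncn (2 / (t * m))).+1.
have [K K_gt0 hK] := ratio_harnack
  [seq (v, act (z ^+ j)%g v) | v <- V, j <- iota 0 N] (pos_harm_drift_gap drift_le_m).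
have eps_gt0 : 0 < m / (2 * K) by rewrite divr_gt0 ?mulr_gt0.
have [_ [y' _ <-] near_sup] := sup_adherent eps_gt0 drift_sup.
have [h [v [vV y'E]]] := V_fund y'; rewrite -/m y'E in near_sup.
have drift_big j : (0 <= j < N)%N -> m / 2 <= drift (act h (act (z ^+ j)%g v)).
  move=> /andP [_ jN].
  have : m - drift (act h (act (z ^+ j)%g v)) <= K * (m - drift (act h v)).
    by apply: (hK (v, act (z ^+ j)%g v)); apply/allpairsPdep; exists v, j; rewrite mem_iota.
  have : K * (m - drift (act h v)) <= K * (m / (2 * K)) by rewrite ler_wpM2l ?ltW //; lra.
  have : K * (m / (2 * K)) = m / 2 by field; rewrite gt_eqF.
  lra.
have := ler_sum_nat drift_big; rewrite sumr_const_nat subn0 drift_telescope.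
have := ratio_le (act h (act (z ^+ N)%g v)); have := ratio_ge0 (act h v).
have : t^-1 < m / 2 * N%:R.
  have -> : t^-1 = m / 2 * (2 / (t * m)) by field; rewrite ?gt_eqF.
  by rewrite ltr_pM2l ?divr_gt0 //; exact: truncnS_gt.
rewrite -mulr_natr; lra.
Qed.

End Drift.

Lemma ratio_invariant_step k : ratio_invariant (lcs k.+1) -> ratio_invariant (lcs k).
Proof.
move=> inv_k1 z kz y; apply/eqP; rewrite eq_le; apply/andP; split.
  by have := drift_le0 inv_k1 kz y; rewrite subr_le0.
have kzV : lcs k z^-1%g by apply: subgroupV => //; exact: lcs_subgroup.
by have := drift_le0 inv_k1 kzV (act z y); rewrite subr_le0 -actM mulVg act1.
Qed.

Lemma ratio_invariantT : nilpotent_group G -> forall z y, ratio (act z y) = ratio y.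
Proof.
move=> [n lcs_n] z; apply: (@nat_descend (fun k => ratio_invariant (lcs k)) n) => //.
  by move=> z'; rewrite lcs_n => -> y; rewrite act1.
exact: ratio_invariant_step.
Qed.

Lemma split_component_eq : nilpotent_group G -> g = f.
Proof.
move=> nil_G; have [V V_fund] := coc_G.
have [_ [v0 [v0V _]]] := V_fund x0.
pose vM := [arg max_(v > SeqSub v0V) ratio (ssval v)]%O.
set M := ratio (ssval vM).
have ratio_le_M y : ratio y <= M.
  have [h [v [vV ->]]] := V_fund y; rewrite ratio_invariantT //.
  rewrite /M /vM; case: Order.TotalTheory.arg_maxP => // w _ w_max.
  exact: (w_max (SeqSub vV)).
have pM : pos_harm (fun y => M * f y - g y).
  split=> [|y]; first by apply: harmB; [apply: harmZ; case: pf | case: pg].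
  by rewrite -ratioK -mulrBl mulr_ge0 ?subr_ge0 ?(ltW (mult_gt0 y)).
have gM y : g y = M * f y.
  apply/eqP; rewrite eq_sym -subr_eq0; apply/eqP.
  by apply: (pos_harm_eq0 (x := ssval vM) pM); rewrite /= -[g _]ratioK subrr.
have M1 : M = 1 by have := gM x0; rewrite f1 g1 mulr1.
by apply: funext => y; rewrite gM M1 mul1r.
Qed.

End MultiplicativeIsExtreme.

Lemma multiplicative_extreme x0 f : nilpotent_group G -> normalized b c x0 f ->
  Defs.multiplicative act f -> extreme_points (normalized b c x0) f.
Proof.
move=> nil_G [pf f1] [gamma [gamma_gt0 [_ f_Tg]]].
split=> // g g' t [pg g1] [pg' _] t01 f_split.
have f_mult z y : f (act z y) = gamma z * f y.
  by have := congr1 (fun F => F y) (f_Tg z^-1%g); rewrite /Tg invgK.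
have f_splitE y : f y = t * g y + (1 - t) * g' y by rewrite f_split.
have gf := split_component_eq pf f1 gamma_gt0 f_mult pg g1 pg' t01 f_splitE nil_G.
have t1_neq0 : 1 - t != 0 by case/andP: t01 => _ t_lt1; rewrite subr_eq0 eq_sym lt_eqF.
rewrite gf; apply: funext => y; apply: (mulfI t1_neq0).
by have := f_splitE y; rewrite gf; lra.
Qed.

End Harnack.

(* Restores [multiplicative] from Defs, shadowed by GRing.Theory. *)
Import Pilot.Defs.

Theorem theorem2 (R : realType) (X : countType) (b : X -> X -> R) (c : X -> R)
  (G : groupType) (act : G -> X -> X) (x0 : X) :
  is_graph b c -> locally_finite b -> graph_connected b ->
  nilpotent_group G -> is_action act -> cocompact act ->
  G_invariant act b c ->
  [set f | Kset b c x0 f /\ multiplicative act f] = extreme_points (Kset b c x0).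
Proof.
move=> graph_bc lf_b conn_b nil_G act_G coc_G inv_bc.
rewrite (Kset_normalized graph_bc lf_b); apply/seteqP; split=> f.
- move=> [nf mult_f].
  exact: (multiplicative_extreme graph_bc lf_b conn_b act_G inv_bc coc_G nil_G nf).
- move=> [[pf f1] f_extreme]; split=> //.
  exact: (extreme_multiplicative graph_bc lf_b conn_b act_G inv_bc coc_G pf f1 f_extreme).
Qed.
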